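(* Let $Y$ be a Young diagram with row lengths $a_1\ge\cdots\ge a_m\ge0$, let $P\subseteq (C\times S)\cup(R\times S)\cup(R\times C)$, and let $1\le i<j\le a_1$. Let $P'=\phi_{c_i,c_j}(P)$. Then (1) $|P'|=|P|$, and (2) if $P$ is a 2-cover of $H(Y)$, then so is $P'$.
   Context: $H(Y)$ has vertex sides $R=\{r_1,\dots,r_m\}$, $C=\{c_1,\dots,c_{a_1}\}$, $S=\{s_1,\dots,s_{a_1}\}$ and edges $\{r_\ell,c_a,s_b\}$ for $1\le\ell\le m$, $1\le a,b\le a_\ell$. For disjoint $A,B$, $A\times B$ is the set of pairs $\{x,y\}$ with $x\in A,y\in B$. A 2-cover of $H(Y)$ is a set of pairs such that every edge of $H(Y)$ contains one of them. Given $P$, let $Q=P\cap(C\times S)$, $W=P\cap(R\times C)$, $N_Q(c)=\{s\in S: cs\in Q\}$, $N_W(c)=\{r\in R: rc\in W\}$, and for an integer $t$ let $L_t=\{r_\ell\in R: a_\ell<t\}$. The shifting $\phi_{c_i,c_j}(P)$ (for $i<j$) is obtained from $P$ by deleting all pairs of $P$ containing $c_i$ or $c_j$ and adding the pairs $\{c_i\}\times(N_Q(c_i)\cup N_Q(c_j))$, $\{c_j\}\times(N_Q(c_i)\cap N_Q(c_j))$, $\{c_i\}\times\big(N_W(c_i)\cap(N_W(c_j)\cup L_j)\big)$, and $\{c_j\}\times\big(N_W(c_j)\cup(N_W(c_i)\setminus L_j)\big)$. *)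

From mathcomp Require Import all_boot.
Set Implicit Arguments. Unset Strict Implicit. Unset Printing Implicit Defensive.

Section HY.
Variables (m n : nat).
(* Vertex set R ⊔ C ⊔ S; r_l, c_a, s_b are 0-based: r l = r_{l+1}, etc. *)
Definition vert : finType := (('I_m + 'I_n) + 'I_n)%type.
Definition rv (l : 'I_m) : vert := inl (inl l).
Definition cv (x : 'I_n) : vert := inl (inr x).
Definition sv (y : 'I_n) : vert := inr y.
Definition Rset : {set vert} := [set rv l | l : 'I_m].
Definition Cset : {set vert} := [set cv x | x : 'I_n].
Definition Sset : {set vert} := [set sv y | y : 'I_n].

Definition pairs (A B : {set vert}) : {set {set vert}} :=
  [set [set x; y] | x in A, y in B].

Definition is_edge (a : 'I_m -> nat) (e : {set vert}) : Prop :=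
  exists l : 'I_m, exists x : 'I_n, exists y : 'I_n,
    [/\ (x < a l)%N, (y < a l)%N & e = [set rv l; cv x; sv y]].

Definition two_cover (a : 'I_m -> nat) (P : {set {set vert}}) : Prop :=
  forall e, is_edge a e -> exists2 p, p \in P & p \subset e.

Definition NQ (P : {set {set vert}}) (x : 'I_n) : {set 'I_n} :=
  [set y | [set cv x; sv y] \in P].
Definition NW (P : {set {set vert}}) (x : 'I_n) : {set 'I_m} :=
  [set l | [set rv l; cv x] \in P].
Definition Lt (a : 'I_m -> nat) (t : nat) : {set 'I_m} := [set l | (a l < t)%N].

(* phi_{c_i,c_j}(P); i, j are 0-based so c_j = cv j has 1-based index j+1,
   hence L_j (1-based) is Lt a j.+1. *)
Definition shift (a : 'I_m -> nat) (i j : 'I_n) (P : {set {set vert}})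
    : {set {set vert}} :=
  [set p in P | (cv i \notin p) && (cv j \notin p)]
  :|: [set [set cv i; sv y] | y in NQ P i :|: NQ P j]
  :|: [set [set cv j; sv y] | y in NQ P i :&: NQ P j]
  :|: [set [set cv i; rv l] | l in NW P i :&: (NW P j :|: Lt a j.+1)]
  :|: [set [set cv j; rv l] | l in NW P j :|: (NW P i :\: Lt a j.+1)].
End HY.

From Pilot Require Import Defs.
From mathcomp Require Import all_boot.

(* Every pair of [P] through [c_i] or [c_j] is some [{c_x, s_y}] or [{c_x, r_l}],
   so [P] is the disjoint union of the pairs avoiding both columns and of two
   stars centred at [c_i] and [c_j], with leaves [N_Q(c)] and [N_W(c)]. The shift
   replaces the leaf sets [(Q_i, Q_j)] by [(Q_i ∪ Q_j, Q_i ∩ Q_j)] and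
   [(W_i, W_j)] by [(W_i ∩ (W_j ∪ L), W_j ∪ (W_i \ L))], which preserves the
   sum of their sizes. An edge [{r_l, c_x, s_y}] is covered iff [{r_l, s_y}],
   [{c_x, s_y}] or [{r_l, c_x}] is a pair. For [x = i] the edge
   [{r_l, c_j, s_y}], present when [r_l \notin L] (i.e. [a_l > j]), and for
   [x = j] the edge [{r_l, c_i, s_y}], always present as [i < j], supply the
   information showing that the new pairs still cover the edge. *)

Set Implicit Arguments. Unset Strict Implicit. Unset Printing Implicit Defensive.

Lemma cardsU_disjoint (T : finType) (A B : {set T}) :
  {in A, forall x, x \notin B} -> #|A :|: B| = #|A| + #|B|.
Proof.
move=> AnotB; apply/eqP; rewrite (leq_card_setU A B).2 disjoint_subset.
by apply/subsetP => x /AnotB; rewrite inE.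
Qed.

Lemma cards_shifted_pair (T : finType) (U W L : {set T}) :
  #|U :&: (W :|: L)| + #|W :|: (U :\: L)| = #|U| + #|W|.
Proof.
rewrite -(cardsUI U W) -[LHS]cardsUI; congr (_ + _); apply: eq_card => t;
by rewrite !inE; case: (t \in U); case: (t \in W); case: (t \in L).
Qed.

Section Vertices.
Variables (m n : nat).
Local Notation V := (vert m n).
Local Notation rv := (@Defs.rv m n).
Local Notation cv := (@Defs.cv m n).
Local Notation sv := (@Defs.sv m n).

Lemma rv_cv (l : 'I_m) (x : 'I_n) : (rv l == cv x) = false. Proof. by []. Qed.
Lemma cv_rv (l : 'I_m) (x : 'I_n) : (cv x == rv l) = false. Proof. by []. Qed.
Lemma rv_sv (l : 'I_m) (y : 'I_n) : (rv l == sv y) = false. Proof. by []. Qed.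
Lemma sv_rv (l : 'I_m) (y : 'I_n) : (sv y == rv l) = false. Proof. by []. Qed.
Lemma cv_sv (x y : 'I_n) : (cv x == sv y) = false. Proof. by []. Qed.
Lemma sv_cv (x y : 'I_n) : (sv y == cv x) = false. Proof. by []. Qed.
Lemma rv_inj : injective rv. Proof. by move=> l1 l2 []. Qed.
Lemma cv_inj : injective cv. Proof. by move=> x1 x2 []. Qed.
Lemma sv_inj : injective sv. Proof. by move=> y1 y2 []. Qed.

Definition vert_eqE :=
  (rv_cv, cv_rv, rv_sv, sv_rv, cv_sv, sv_cv,
   inj_eq rv_inj, inj_eq cv_inj, inj_eq sv_inj).

Definition cross_pairs : {set {set V}} :=
  pairs (Cset m n) (Sset m n) :|: pairs (Rset m n) (Sset m n)
  :|: pairs (Rset m n) (Cset m n).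

Lemma cross_pairsP p : p \in cross_pairs ->
  [\/ exists x y, p = [set cv x; sv y],
      exists l y, p = [set rv l; sv y] |
      exists l x, p = [set rv l; cv x]].
Proof.
rewrite !inE => /orP[/orP[]|] /imset2P[u v /imsetP[s _ ->] /imsetP[t _ ->] ->].
- by apply: Or31; exists s, t.
- by apply: Or32; exists s, t.
- by apply: Or33; exists s, t.
Qed.

Lemma subset_pair (u v : V) (e : {set V}) :
  u \in e -> v \in e -> [set u; v] \subset e.
Proof. by move=> ue ve; rewrite subUset !sub1set ue ve. Qed.

Lemma pair_sub_edgeP (l : 'I_m) (x y : 'I_n) (p : {set V}) : p \in cross_pairs ->
  reflect [\/ p = [set rv l; sv y], p = [set cv x; sv y] | p = [set rv l; cv x]]
          (p \subset [set rv l; cv x; sv y]).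
Proof.
move=> /cross_pairsP pP; apply: (iffP idP) => [/subsetP sub|]; last first.
  by case=> ->; apply: subset_pair; rewrite !inE eqxx ?orbT.
move: sub; case: pP => [[s [t ->]]|[s [t ->]]|[s [t ->]]] sub;
have := sub _ (set21 _ _); have := sub _ (set22 _ _); rewrite !inE !vert_eqE /= ?orbF;
by move=> /eqP-> /eqP->; first [exact: Or31 | exact: Or32 | exact: Or33].
Qed.

Definition covers (P : {set {set V}}) (l : 'I_m) (x y : 'I_n) : bool :=
  [|| [set rv l; sv y] \in P, y \in NQ P x | l \in NW P x].

Lemma two_cover_covers (a : 'I_m -> nat) (P : {set {set V}}) l (x y : 'I_n) :
  P \subset cross_pairs -> two_cover a P ->
  (x < a l)%N -> (y < a l)%N -> covers P l x y.
Proof.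
move=> /subsetP Pcross Pcov xl yl.
have [p pP] := Pcov _ (ex_intro _ l (ex_intro _ x (ex_intro _ y (And3 xl yl erefl)))).
by case/(pair_sub_edgeP _ _ _ (Pcross p pP)) => E; rewrite /covers !inE -E pP ?orbT.
Qed.

Lemma covers_two_cover (a : 'I_m -> nat) (P : {set {set V}}) :
  (forall l (x y : 'I_n), (x < a l)%N -> (y < a l)%N -> covers P l x y) ->
  two_cover a P.
Proof.
move=> Pcov e [l [x [y [xl yl ->]]]].
have /or3P[rs | /[!inE] cs | /[!inE] rc] := Pcov l x y xl yl; [exists [set rv l; sv y] |
  exists [set cv x; sv y] | exists [set rv l; cv x]] => //;
by apply: subset_pair; rewrite !inE eqxx ?orbT.
Qed.

Definition star (x : 'I_n) (Q : {set 'I_n}) (W : {set 'I_m}) : {set {set V}} :=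
  [set [set cv x; sv y] | y in Q] :|: [set [set cv x; rv l] | l in W].

Lemma star_cv x Q W p z : p \in star x Q W -> (cv z \in p) = (z == x).
Proof. by rewrite !inE => /orP[] /imsetP[? _ ->]; rewrite !inE !vert_eqE ?orbF. Qed.

Lemma card_star x Q W : #|star x Q W| = #|Q| + #|W|.
Proof.
rewrite cardsU_disjoint; last first.
  move=> _ /imsetP[y _ ->]; apply/imsetP => -[l _ /setP/(_ (sv y))].
  by rewrite !inE !vert_eqE eqxx.
rewrite !card_imset // => [l1 l2 /setP/(_ (rv l1)) | y1 y2 /setP/(_ (sv y1))];
by rewrite !inE !vert_eqE eqxx => /esym/eqP.
Qed.

Lemma mem_star_sv x (Q : {set 'I_n}) (W : {set 'I_m}) y :
  y \in Q -> [set cv x; sv y] \in star x Q W.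
Proof. by move=> yQ; rewrite inE (imset_f (fun y => [set cv x; sv y])). Qed.

Lemma mem_star_rv x (Q : {set 'I_n}) (W : {set 'I_m}) l :
  l \in W -> [set rv l; cv x] \in star x Q W.
Proof. by move=> lW; rewrite inE setUC (imset_f (fun l => [set cv x; rv l])) ?orbT. Qed.

Lemma star_neighbourhood (P : {set {set V}}) x : P \subset cross_pairs ->
  [set p in P | cv x \in p] = star x (NQ P x) (NW P x).
Proof.
move=> /subsetP Pcross; apply/setP => p; rewrite inE; apply/andP/idP => [[pP]|].
  case: (cross_pairsP (Pcross p pP)) => [[s [t E]]|[s [t E]]|[s [t E]]]; subst p;
  rewrite !inE !vert_eqE ?orbF //= => /eqP ->.
    by rewrite (imset_f (fun y => [set cv s; sv y])) // inE.
  by rewrite setUC (imset_f (fun l => [set cv t; rv l])) ?orbT // inE.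
move=> pS; rewrite (star_cv x pS) eqxx; split=> //.
by case/setUP: pS => /imsetP[? /[!inE] ? ->] //; rewrite setUC.
Qed.

Lemma card_union_stars (K : {set {set V}}) (i j : 'I_n) Qi Wi Qj Wj :
  i != j -> (forall p, p \in K -> (cv i \notin p) && (cv j \notin p)) ->
  #|K :|: star i Qi Wi :|: star j Qj Wj| = #|K| + (#|Qi| + #|Wi|) + (#|Qj| + #|Wj|).
Proof.
move=> ij Kij; rewrite cardsU_disjoint; last first.
  move=> p /setUP[/Kij/andP[_ pj] | pi].
    by apply: contra pj => /(star_cv j) ->; rewrite eqxx.
  by apply/negP => /(star_cv i); rewrite (star_cv i pi) eqxx (negbTE ij).
rewrite cardsU_disjoint ?card_star //.
by move=> p /Kij/andP[pi _]; apply: contra pi => /(star_cv i) ->; rewrite eqxx.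
Qed.

Section Shift.
Variables (a : 'I_m -> nat) (i j : 'I_n) (P : {set {set V}}).

Local Notation K := [set p in P | (cv i \notin p) && (cv j \notin p)].
Local Notation L := (Lt a j.+1).

Lemma shiftE : shift a i j P =
  K :|: star i (NQ P i :|: NQ P j) (NW P i :&: (NW P j :|: L))
    :|: star j (NQ P i :&: NQ P j) (NW P j :|: (NW P i :\: L)).
Proof. by apply/setP => p; rewrite /shift /star !in_setU; do !case: (_ \in _). Qed.

Lemma stars_decomposition : P \subset cross_pairs ->
  P = K :|: star i (NQ P i) (NW P i) :|: star j (NQ P j) (NW P j).
Proof.
move=> Pcross; rewrite -!star_neighbourhood //; apply/setP => p.
by rewrite !inE; do !case: (_ \in _).
Qed.

Lemma card_shift : i != j -> P \subset cross_pairs -> #|shift a i j P| = #|P|.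
Proof.
move=> ij Pcross; have Kij p : p \in K -> (cv i \notin p) && (cv j \notin p).
  by rewrite inE => /andP[].
rewrite shiftE [in RHS](stars_decomposition Pcross) !card_union_stars //.
rewrite -!addnA; congr (_ + _).
by rewrite addnA addnACA cardsUI cards_shifted_pair addnACA -addnA.
Qed.

Lemma shift_keep p : p \in P -> cv i \notin p -> cv j \notin p -> p \in shift a i j P.
Proof. by move=> pP pi pj; rewrite shiftE !inE pP pi pj. Qed.

Lemma star_i_sub_shift :
  star i (NQ P i :|: NQ P j) (NW P i :&: (NW P j :|: L)) \subset shift a i j P.
Proof. by rewrite shiftE -setUA setUCA subsetUl. Qed.

Lemma star_j_sub_shift :
  star j (NQ P i :&: NQ P j) (NW P j :|: (NW P i :\: L)) \subset shift a i j P.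
Proof. by rewrite shiftE subsetUr. Qed.

Lemma NQ_shift_i : NQ P i :|: NQ P j \subset NQ (shift a i j P) i.
Proof. by apply/subsetP => y yQ; rewrite inE (subsetP star_i_sub_shift) ?mem_star_sv. Qed.

Lemma NW_shift_i : NW P i :&: (NW P j :|: L) \subset NW (shift a i j P) i.
Proof. by apply/subsetP => l lW; rewrite inE (subsetP star_i_sub_shift) ?mem_star_rv. Qed.

Lemma NQ_shift_j : NQ P i :&: NQ P j \subset NQ (shift a i j P) j.
Proof. by apply/subsetP => y yQ; rewrite inE (subsetP star_j_sub_shift) ?mem_star_sv. Qed.

Lemma NW_shift_j : NW P j :|: (NW P i :\: L) \subset NW (shift a i j P) j.
Proof. by apply/subsetP => l lW; rewrite inE (subsetP star_j_sub_shift) ?mem_star_rv. Qed.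

Lemma NQ_shift_other x : x != i -> x != j -> NQ P x \subset NQ (shift a i j P) x.
Proof.
move=> xi xj; apply/subsetP => y; rewrite inE => yQ.
by rewrite !inE yQ !vert_eqE /= ?orbF (eq_sym i) (eq_sym j) xi xj.
Qed.

Lemma NW_shift_other x : x != i -> x != j -> NW P x \subset NW (shift a i j P) x.
Proof.
move=> xi xj; apply/subsetP => l; rewrite inE => lW.
by rewrite !inE lW !vert_eqE /= ?orbF (eq_sym i) (eq_sym j) xi xj.
Qed.

Lemma covers_shift l (x y : 'I_n) : (i < j)%N ->
  (forall x' : 'I_n, (x' < a l)%N -> covers P l x' y) ->
  (x < a l)%N -> covers (shift a i j P) l x y.
Proof.
move=> ij Pcov xl; have [rs | rsN] := boolP ([set rv l; sv y] \in P).
  by rewrite /covers shift_keep // !inE !vert_eqE.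
have coverQW (x' : 'I_n) : (x' < a l)%N -> (y \in NQ P x') || (l \in NW P x').
  by move/Pcov; rewrite /covers (negbTE rsN).
apply/orP; right; have [Exi | xi] := eqVneq x i.
  subst x; have /orP[Qi | Wi] := coverQW i xl.
    by rewrite (subsetP NQ_shift_i) // inE Qi.
  have [WjL | ] := boolP (l \in NW P j :|: L).
    by rewrite (subsetP NW_shift_i) ?orbT // inE Wi WjL.
  rewrite in_setU negb_or => /andP[Wj]; rewrite inE -leqNgt => jl.
  have /orP[Qj | ] := coverQW j jl; last by rewrite (negbTE Wj).
  by rewrite (subsetP NQ_shift_i) // inE Qj orbT.
have [Exj | xj] := eqVneq x j.
  subst x; have [Wj | Wj] := boolP (l \in NW P j).
    by rewrite (subsetP NW_shift_j) ?orbT // inE Wj.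
  have Qj : y \in NQ P j by move: (coverQW j xl); rewrite (negbTE Wj) orbF.
  have [Qi | Qi] := boolP (y \in NQ P i).
    by rewrite (subsetP NQ_shift_j) // inE Qi Qj.
  have Wi : l \in NW P i by move: (coverQW i (ltn_trans ij xl)); rewrite (negbTE Qi).
  by rewrite (subsetP NW_shift_j) ?orbT // in_setU in_setD Wi !inE -leqNgt xl orbT.
case/orP: (coverQW x xl) => [Qx | Wx].
  by rewrite (subsetP (NQ_shift_other xi xj)).
by rewrite (subsetP (NW_shift_other xi xj)) ?orbT.
Qed.

End Shift.
End Vertices.

Theorem lemma3 (m n : nat) (a : 'I_m -> nat)
  (Hm : (0 < m)%N)
  (Ha_mono : forall l1 l2 : 'I_m, (l1 <= l2)%N -> (a l2 <= a l1)%N)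
  (Ha_first : forall l : 'I_m, val l = 0%N -> a l = n)
  (P : {set {set vert m n}})
  (HP : P \subset pairs (Cset m n) (Sset m n) :|: pairs (Rset m n) (Sset m n)
                  :|: pairs (Rset m n) (Cset m n))
  (i j : 'I_n) (Hij : (i < j)%N) :
  #|shift a i j P| = #|P| /\ (two_cover a P -> two_cover a (shift a i j P)).
Proof.
have ij : i != j by rewrite -val_eqE neq_ltn Hij.
split; first exact: card_shift ij HP.
move=> Pcov; apply: covers_two_cover => l x y xl yl.
by apply: covers_shift Hij _ xl => x' x'l; apply: two_cover_covers HP Pcov x'l yl.
Qed.
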